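(* Let $L$ be a finite list with $t$ marked items, where $|L|/4 < t \le |L|$, and let $\theta \in (0,\pi/2]$ satisfy $\sin^2\theta = t/|L|$. For a positive integer $m$, let $P_m$ be the probability of finding a marked item when one chooses $j$ uniformly at random among the non-negative integers smaller than $m$, applies $j$ Grover iterations to the uniform superposition over $L$ and measures. Then $$P_m \ge \begin{cases} \frac14 & \text{for } m = 1,\\ \frac12 - \frac{1}{2\pi}\frac{1}{1-\frac{\pi^2}{96}} \approx 0.323 & \text{for } m > 1.\end{cases}$$
   Context: A Grover iteration is the unitary that reflects through the unmarked states followed by a reflection through the uniform superposition over $L$. For $\theta \ne \pi/2$ one has $P_m = \frac12 - \frac{\sin(4m\theta)}{4m\sin(2\theta)}$. *)

From HB Require Import structures.
From mathcomp Require Import all_boot all_order all_algebra.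
From mathcomp Require Import all_classical all_reals all_analysis.
Set Implicit Arguments. Unset Strict Implicit. Unset Printing Implicit Defensive.
Import Order.TTheory GRing.Theory Num.Theory.
Local Open Scope ring_scope.

Section Grover.
Variables (R : realType) (N : nat) (M : {set 'I_N}).

Definition unif_sup : 'cV[R]_N := \col_(i < N) (Num.sqrt (N%:R))^-1.

Definition refl_unmarked : 'M[R]_N :=
  \matrix_(i < N, j < N) (if i == j then (if i \in M then -1 else 1) else 0).

Definition refl_unif : 'M[R]_N := 2 *: (unif_sup *m unif_sup^T) - 1%:M.

Definition grover_iter : 'M[R]_N := refl_unif *m refl_unmarked.

Definition grover_state (j : nat) : 'cV[R]_N := iter j (mulmx grover_iter) unif_sup.

Definition success_prob (j : nat) : R :=
  \sum_(x in M) (grover_state j x ord0) ^+ 2.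

Definition P (m : nat) : R := (m%:R)^-1 * \sum_(j < m) success_prob j.

End Grover.

From HB Require Import structures.
From mathcomp Require Import all_boot all_order all_algebra.
From mathcomp Require Import all_classical all_reals all_analysis.
From mathcomp Require Import ring lra zify.
Set Implicit Arguments. Unset Strict Implicit. Unset Printing Implicit Defensive.
Import Order.TTheory GRing.Theory Num.Theory.
Import numFieldNormedType.Exports.
Local Open Scope ring_scope.

(* The Grover iterates stay in the plane spanned by the uniform superpositions
   over the marked and over the unmarked items, and each iteration rotates this
   plane by 2 theta; so after j iterations the success probability is
   sin^2 ((2j+1) theta), and telescoping gives
   P_m = 1/2 - sin (4 m theta) / (4 m sin (2 theta)).  For m >= 2 either
   sin (4 m theta) <= 0, or 2 theta lies in [pi/(2m), pi - pi/(2m)] (as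
   theta > pi/6), and then sin (2 theta) >= sin (pi/(2m)) >= x - x^3/6 at
   x = pi/(2m), which is where the constant 2 pi (1 - pi^2/96) comes from. *)

Section Trigonometry.
Variable R : realType.
Implicit Types x y : R.

Lemma ger0_derive_le (f df : R -> R) (a b : R) : a <= b ->
  (forall x, is_derive x 1 f (df x)) -> (forall x, a <= x -> 0 <= df x) ->
  f a <= f b.
Proof.
move=> ab f_df df_ge0.
have cf : {within `[a, b], continuous f}%classic.
  apply: continuous_subspaceT => x.
  have dx : derivable f x 1 by apply: ex_derive; exact: f_df.
  exact/differentiable_continuous/derivable1_diffP.
have [c /itvP cab E] := MVT_segment ab (fun x _ => f_df x) cf.
by rewrite -subr_ge0 E mulr_ge0 ?subr_ge0 ?df_ge0 ?cab.
Qed.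

Lemma sin_le_id x : 0 <= x -> sin x <= x.
Proof.
move=> x0; rewrite -subr_ge0.
have := @ger0_derive_le (fun y => y - sin y) (fun y => 1 - cos y) 0 x x0.
by rewrite sin0 subr0; apply=> // y _; rewrite subr_ge0 cos_le1.
Qed.

Lemma cos_ge_quadratic x : 0 <= x -> 1 - x ^+ 2 / 2 <= cos x.
Proof.
move=> x0; rewrite -subr_ge0.
have := @ger0_derive_le (fun y => cos y - (1 - y ^+ 2 / 2)) (fun y => y - sin y) 0 x x0.
rewrite cos0 expr0n mul0r subr0 subrr; apply=> [y|y y0].
  by apply: is_derive_eq; rewrite /GRing.scale /=; field.
by rewrite subr_ge0 sin_le_id.
Qed.

Lemma sin_ge_cubic x : 0 <= x -> x - x ^+ 3 / 6 <= sin x.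
Proof.
move=> x0; rewrite -subr_ge0.
have := @ger0_derive_le (fun y => sin y - (y - y ^+ 3 / 6))
                       (fun y => cos y - (1 - y ^+ 2 / 2)) 0 x x0.
rewrite sin0 expr0n mul0r !subr0; apply=> [y|y y0].
  by apply: is_derive_eq; rewrite /GRing.scale /=; field.
by rewrite subr_ge0 cos_ge_quadratic.
Qed.

Lemma sin_le_sin_sym x y : 0 <= x <= pi / 2 -> x <= y <= pi - x -> sin x <= sin y.
Proof.
move=> /andP[x0 xpi2] /andP[xy ypix]; have pi2 := @pi_ge2 R.
have ler_sin u v : - (pi / 2) <= u <= pi / 2 -> - (pi / 2) <= v <= pi / 2 ->
    u <= v -> sin u <= sin v.
  by move=> uI vI uv; rewrite leNgt ltr_sin ?in_itv // -leNgt.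
have [ypi2|pi2y] := lerP y (pi / 2).
  by apply: ler_sin => //; apply/andP; split; lra.
have -> : sin y = sin (pi - y) by rewrite sinB sinpi cospi; ring.
by apply: ler_sin; [apply/andP; split; lra..|lra].
Qed.

Lemma mul_sin_pi_div_ge (m : nat) : (2 <= m)%N ->
  2 * pi * (1 - pi ^+ 2 / 96) <= 4 * m%:R * sin (pi / (2 * m%:R)) :> R.
Proof.
move=> m2; have pi2 := @pi_ge2 R.
have m2' : (2 : R) <= m%:R by rewrite (ler_nat R 2 m).
set x : R := pi / (2 * m%:R).
have x0 : 0 <= x by rewrite divr_ge0 //; lra.
apply: le_trans (_ : 4 * m%:R * (x - x ^+ 3 / 6) <= _); last first.
  by rewrite ler_pM2l ?sin_ge_cubic //; lra.
rewrite -subr_ge0.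
have -> : 4 * m%:R * (x - x ^+ 3 / 6) - 2 * pi * (1 - pi ^+ 2 / 96) =
          pi ^+ 3 * (m%:R ^+ 2 - 4) / (48 * m%:R ^+ 2).
  by rewrite /x; field; lra.
by rewrite divr_ge0 ?mulr_ge0 ?exprn_ge0 //; nra.
Qed.

Lemma sin_four_mul_le (m : nat) (theta : R) : (2 <= m)%N ->
  0 < theta < pi / 2 -> 1 / 2 < sin theta ->
  2 * pi * (1 - pi ^+ 2 / 96) * sin ((4 * m)%:R * theta) <= 4 * m%:R * sin (theta *+ 2).
Proof.
move=> m2 /andP[theta0 theta_pi2] sin_gt; have pi2 := @pi_ge2 R; have pi4 := @pihalf_lt2 R.
have m2' : (2 : R) <= m%:R by rewrite (ler_nat R 2 m).
have Q0 : 0 < 2 * pi * (1 - pi ^+ 2 / 96) :> R by rewrite !mulr_gt0 //; nra.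
have sin2_ge0 : 0 <= sin (theta *+ 2) by apply: sin_ge0_pi; rewrite mulr2n; lra.
set x : R := pi / (2 * m%:R).
have mx : 2 * m%:R * x = pi by rewrite /x; field; lra.
have x_le : x <= pi / 4 by rewrite ler_pdivrMr ?ler_pdivlMl; nra.
have [near_pi|far_pi] := lerP (pi - x) (theta *+ 2).
  apply: le_trans (_ : 0 <= _); last by rewrite mulr_ge0 //; lra.
  rewrite pmulr_rle0 //.
  (* 4 m theta lies in [2 m pi - pi, 2 m pi] *)
  set y := 2 * m%:R * (pi - theta *+ 2).
  have -> : (4 * m)%:R * theta = - y + (pi *+ 2) *+ m by rewrite /y natrM mulr2n; ring.
  rewrite (periodicn (@sinD2pi R)) sinN oppr_le0 sin_ge0_pi //; apply/andP; split.
    by rewrite mulr_ge0 //; rewrite mulr2n; lra.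
  by rewrite -mx ler_pM2l; rewrite ?mulr2n; lra.
have x_le_2theta : x <= theta *+ 2 by have := sin_le_id (ltW theta0); rewrite mulr2n; lra.
apply: le_trans (_ : 2 * pi * (1 - pi ^+ 2 / 96) <= _).
  by rewrite ler_piMr ?sin_le1 // ltW.
apply: le_trans (mul_sin_pi_div_ge m2) _.
rewrite ler_pM2l; last lra.
have x0 : 0 <= x by rewrite divr_ge0 //; lra.
by apply: sin_le_sin_sym; rewrite -/x; apply/andP; split; lra.
Qed.

Lemma sin2_odd_telescoping (theta : R) (j : nat) :
  4 * sin (theta *+ 2) * sin ((2 * j + 1)%:R * theta) ^+ 2 =
  2 * sin (theta *+ 2) - (sin ((4 * j.+1)%:R * theta) - sin ((4 * j)%:R * theta)).
Proof.
set a := (2 * j + 1)%:R * theta.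
have -> : (4 * j.+1)%:R * theta = a *+ 2 + theta *+ 2.
  by rewrite /a [(2 * j + 1)%:R]natrD !natrM; ring.
have -> : (4 * j)%:R * theta = a *+ 2 - theta *+ 2.
  by rewrite /a [(2 * j + 1)%:R]natrD !natrM; ring.
by rewrite (sinD (a *+ 2)) (sinB (a *+ 2)) (cos_mulr2n a) cos2sin2; ring.
Qed.

Lemma sum_sin2_odd (theta : R) (m : nat) :
  4 * sin (theta *+ 2) * \sum_(j < m) sin ((2 * j + 1)%:R * theta) ^+ 2 =
  2 * m%:R * sin (theta *+ 2) - sin ((4 * m)%:R * theta).
Proof.
rewrite mulr_sumr; under eq_bigr do rewrite sin2_odd_telescoping.
rewrite sumrB sumr_const card_ord.
rewrite -(big_mkord xpredT (fun j => sin ((4 * j.+1)%:R * theta) - sin ((4 * j)%:R * theta))).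
rewrite telescope_sumr //.
by rewrite muln0 mul0r sin0 subr0 -[_ *+ m]mulr_natr mulrAC.
Qed.

Lemma mean_sin2_odd_ge (m : nat) (theta : R) : (2 <= m)%N ->
  0 < theta <= pi / 2 -> 1 / 2 < sin theta ->
  1 / 2 - (2 * pi)^-1 * (1 - pi ^+ 2 / 96)^-1 <=
    m%:R^-1 * \sum_(j < m) sin ((2 * j + 1)%:R * theta) ^+ 2.
Proof.
move=> m2 /andP[theta0 theta_le] sin_gt; have pi2 := @pi_ge2 R; have pi4 := @pihalf_lt2 R.
have m0 : (0 : R) < m%:R by rewrite ltr0n; case: m m2.
have Q0 : 0 < 2 * pi * (1 - pi ^+ 2 / 96) :> R by rewrite !mulr_gt0 //; nra.
rewrite -invfM; set Q := 2 * pi * _ in Q0 *.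
have invQ0 : 0 < Q^-1 by rewrite invr_gt0.
set T := \sum_(j < m) _.
rewrite [_^-1 * T]mulrC ler_pdivlMr //.
have [theta_lt|theta_ge] := ltrP theta (pi / 2); last first.
  have -> : T = m%:R.
    have theta_eq : theta = pi / 2 by apply/le_anti; rewrite theta_le theta_ge.
    rewrite /T (eq_bigr (fun _ => 1)) ?sumr_const ?card_ord // => j _.
    have -> : (2 * j + 1)%:R * theta = pi / 2 + pi *+ j.
      by rewrite theta_eq natrD natrM; field.
    by rewrite (alternatingn (@sinDpi R)) sin_pihalf mulr1 -exprM mulnC exprM sqrrN !expr1n.
  by rewrite ler_piMl ?ltW //; lra.
have sin2_gt0 : 0 < sin (theta *+ 2) by apply: sin_gt0_pi; rewrite mulr2n; lra.
have bound : sin ((4 * m)%:R * theta) <= 4 * m%:R * sin (theta *+ 2) / Q.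
  by rewrite ler_pdivlMr // mulrC sin_four_mul_le ?theta0.
rewrite -(ler_pM2l (_ : 0 < 4 * sin (theta *+ 2))) ?mulr_gt0 // sum_sin2_odd.
have -> : 4 * sin (theta *+ 2) * ((1 / 2 - Q^-1) * m%:R) =
          2 * m%:R * sin (theta *+ 2) - 4 * m%:R * sin (theta *+ 2) / Q.
  by field; rewrite gt_eqF.
by rewrite lerD2l lerN2.
Qed.

End Trigonometry.

Section MarkedColumns.
Variables (R : realType) (N : nat) (M : {set 'I_N}).

Definition marked_col (a b : R) : 'cV[R]_N := \col_i (if i \in M then a else b).

Lemma eq_marked_col a a' b b' : a = a' -> ((#|M| < N)%N -> b = b') ->
  marked_col a b = marked_col a' b'.
Proof.
move=> <- bb'; apply/matrixP => i j; rewrite !mxE.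
case: ifPn => // iM; rewrite bb' // -[N in (_ < N)%N]card_ord.
by apply/proper_card/properP; split; [exact: subset_predT | exists i].
Qed.

Lemma sum_marked_col a b :
  \sum_i marked_col a b i ord0 = #|M|%:R * a + (N - #|M|)%:R * b.
Proof.
rewrite (bigID (mem M)) /=; under eq_bigr => i iM do rewrite mxE iM.
under [X in _ + X]eq_bigr => i /negbTE iM do rewrite mxE iM.
by rewrite !sumr_const -[N in (N - _)%N]card_ord -(cardC M) addKn !mulr_natl.
Qed.

Lemma refl_unmarked_col a b : refl_unmarked R M *m marked_col a b = marked_col (- a) b.
Proof.
apply/matrixP => i j; rewrite !mxE (bigD1 i) //= big1 => [|k ki]; last first.
  by rewrite !mxE eq_sym (negbTE ki) mul0r.
by rewrite !mxE eqxx addr0; case: ifP; rewrite ?mulN1r ?mul1r.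
Qed.

Lemma refl_unifE (w : 'cV[R]_N) :
  refl_unif R N *m w = \col_i (2 / N%:R * \sum_k w k ord0 - w i ord0).
Proof.
apply/matrixP => i j; rewrite /refl_unif mulmxBl mul1mx -scalemxAl -mulmxA.
rewrite [j]ord1 !mxE big_ord1 !mxE; under eq_bigr do rewrite !mxE.
have rr : (Num.sqrt N%:R)^-1 * (Num.sqrt N%:R)^-1 = N%:R^-1 :> R.
  by rewrite -invfM -expr2 sqr_sqrtr ?ler0n.
by rewrite -!mulr_sumr -rr; ring.
Qed.

Lemma refl_unif_col a b :
  let d := 2 / N%:R * (#|M|%:R * a + (N - #|M|)%:R * b) in
  refl_unif R N *m marked_col a b = marked_col (d - a) (d - b).
Proof.
rewrite refl_unifE sum_marked_col; apply/matrixP => i j; rewrite !mxE.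
by case: ifP.
Qed.

Lemma grover_iter_col a b :
  let d := 2 / N%:R * ((N - #|M|)%:R * b - #|M|%:R * a) in
  grover_iter R M *m marked_col a b = marked_col (d + a) (d - b).
Proof.
rewrite /grover_iter -mulmxA refl_unmarked_col refl_unif_col.
by congr marked_col; rewrite ?opprK; congr (_ * _ + _); ring.
Qed.

End MarkedColumns.

(* Also true for z = 0, since x / 0 = 0. *)
Lemma mul_sqr_div (R : fieldType) (z x : R) : z ^+ 2 * (x / z) = z * x.
Proof. by have [->|z0] := eqVneq z 0; [rewrite expr0n !mul0r | field]. Qed.

Section GroverAmplitudes.
Variables (R : realType) (N : nat) (M : {set 'I_N}) (theta : R).
Hypothesis sin2_theta : sin theta ^+ 2 = #|M|%:R / N%:R.
Hypothesis sin_theta_neq0 : sin theta != 0.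

Local Notation r := (Num.sqrt (N%:R : R)).

Lemma natN_neq0 : (N%:R : R) != 0.
Proof.
apply: contraNneq sin_theta_neq0 => N0.
by rewrite -sqrf_eq0 sin2_theta N0 invr0 mulr0.
Qed.

Lemma sqrtN_neq0 : r != 0.
Proof. by rewrite sqrtr_eq0 -ltNge lt0r natN_neq0 ler0n. Qed.

Lemma card_marked : #|M|%:R = (r * sin theta) ^+ 2.
Proof. by rewrite exprMn sin2_theta sqr_sqrtr ?ler0n // mulrC divfK ?natN_neq0. Qed.

Lemma card_unmarked : (N - #|M|)%:R = (r * cos theta) ^+ 2.
Proof.
rewrite natrB; last by rewrite -[X in (_ <= X)%N](card_ord N) max_card.
by rewrite card_marked !exprMn cos2sin2 sqr_sqrtr ?ler0n //; ring.
Qed.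

Lemma cos_theta_neq0 : (#|M| < N)%N -> cos theta != 0.
Proof.
rewrite -subn_gt0 -(ltr0n R) card_unmarked => /gt_eqF.
by rewrite sqrf_eq0 mulf_eq0 => /norP[].
Qed.

(* If cos theta = 0 every item is marked, so the junk second amplitude never
   matters (cf. eq_marked_col). *)
Definition angle_col (alpha : R) : 'cV[R]_N :=
  marked_col M (sin alpha / (r * sin theta)) (cos alpha / (r * cos theta)).

Lemma unif_sup_angle : unif_sup R N = angle_col theta.
Proof.
have -> : unif_sup R N = marked_col M r^-1 r^-1.
  by apply/matrixP => i j; rewrite !mxE; case: ifP.
have r0 := sqrtN_neq0.
by apply: eq_marked_col => [|/cos_theta_neq0 c0]; field; apply/andP.
Qed.

Lemma grover_iter_angle alpha :
  grover_iter R M *m angle_col alpha = angle_col (alpha + theta *+ 2).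
Proof.
rewrite grover_iter_col card_marked card_unmarked !mul_sqr_div /angle_col.
have r0 := sqrtN_neq0; have rN : N%:R = r ^+ 2 by rewrite sqr_sqrtr ?ler0n.
set sqrtN := r in r0 rN *; rewrite rN (sinD alpha) (cosD alpha) sin_mulr2n cos_mulr2n.
apply: eq_marked_col => [|/cos_theta_neq0 c0].
  by rewrite cos2sin2; field; apply/andP.
by field; apply/andP.
Qed.

Lemma grover_stateE j : grover_state R M j = angle_col ((2 * j + 1)%:R * theta).
Proof.
elim: j => [|j IHj]; first by rewrite mul1r -unif_sup_angle.
rewrite [grover_state _ _ _]/= -/(grover_state R M j) IHj grover_iter_angle.
by congr angle_col; rewrite !natrD !natrM; ring.
Qed.

Lemma success_probE j : success_prob R M j = sin ((2 * j + 1)%:R * theta) ^+ 2.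
Proof.
rewrite /success_prob grover_stateE.
under eq_bigr => i iM do rewrite mxE iM.
rewrite sumr_const -[_ *+ #|M|]mulr_natl card_marked.
by field; rewrite sin_theta_neq0 sqrtN_neq0.
Qed.

Lemma PE m : P R M m = m%:R^-1 * \sum_(j < m) sin ((2 * j + 1)%:R * theta) ^+ 2.
Proof. by congr (_ * _); apply: eq_bigr => j _; rewrite success_probE. Qed.

End GroverAmplitudes.

Theorem lemma14 (R : realType) (N : nat) (M : {set 'I_N}) (theta : R) (m : nat) :
  (N < 4 * #|M|)%N -> (#|M| <= N)%N ->
  0 < theta -> theta <= pi / 2 ->
  sin theta ^+ 2 = #|M|%:R / N%:R ->
  (0 < m)%N ->
  (m = 1%N -> 1 / 4 <= @P R N M m) /\
  ((1 < m)%N -> 1 / 2 - (2 * pi)^-1 * (1 - pi ^+ 2 / 96)^-1 <= @P R N M m).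
Proof.
move=> N_lt M_le theta0 theta_le sin2_theta _.
have pi2 := @pi_ge2 R.
have N0 : (0 < N)%N by lia.
have sin2_gt : 1 / 4 < sin theta ^+ 2.
  have : N%:R < 4 * #|M|%:R :> R by rewrite -natrM ltr_nat.
  by rewrite sin2_theta ltr_pdivlMr ?ltr0n //; lra.
have sin_gt0 : 0 < sin theta by apply: sin_gt0_pi; apply/andP; split; lra.
have sin_gt : 1 / 2 < sin theta by nra.
rewrite (PE sin2_theta (lt0r_neq0 sin_gt0)); split => [-> | m_gt1].
  by rewrite big_ord1 /= invr1 !mul1r; lra.
by apply: (mean_sin2_odd_ge m_gt1); rewrite ?theta0.
Qed.
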